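(* Let $N,L,s$ be positive integers with $s\le L$, let $\mathbf{D}\in\mathbb{R}^{N\times N}$ and $\mathbf{H}\in\mathbb{R}^{N\times L}$, and consider the discrete-time linear system $\mathbf{x}_k=\mathbf{D}\mathbf{x}_{k-1}+\mathbf{H}\mathbf{h}_k$ with state $\mathbf{x}_k\in\mathbb{R}^N$ and inputs $\mathbf{h}_k\in\mathbb{R}^L$ constrained to satisfy $\|\mathbf{h}_k\|_0\le s$. Let $R_{\mathbf{D}}=\operatorname{rank}(\mathbf{D})$. Then the system is $s$-sparse-controllable if and only if $$\operatorname{rank}\begin{bmatrix}\lambda\mathbf{I}-\mathbf{D} & \mathbf{H}\end{bmatrix}=N\ \text{ for all }\lambda\in\mathbb{C},\qquad\text{and}\qquad N\le s+R_{\mathbf{D}}.$$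
   Context: $\|\cdot\|_0$ denotes the number of nonzero entries of a vector. The system is called $s$-sparse-controllable if for every initial state $\mathbf{x}_0=\mathbf{x}_{\mathrm{init}}\in\mathbb{R}^N$ and every final state $\mathbf{x}_{\mathrm{final}}\in\mathbb{R}^N$ there exist a finite $K$ and inputs $\mathbf{h}_1,\dots,\mathbf{h}_K\in\mathbb{R}^L$ with $\|\mathbf{h}_k\|_0\le s$ for all $k$ that steer the system from $\mathbf{x}_0=\mathbf{x}_{\mathrm{init}}$ to $\mathbf{x}_K=\mathbf{x}_{\mathrm{final}}$. *)

From HB Require Import structures.
From mathcomp Require Import all_boot all_order all_algebra.
From mathcomp Require Import complex.
From mathcomp Require Import reals.
Set Implicit Arguments. Unset Strict Implicit. Unset Printing Implicit Defensive.
Import Order.TTheory GRing.Theory Num.Theory.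
Local Open Scope ring_scope.

Definition l0norm (R : ringType) (L : nat) (v : 'cV[R]_L) : nat :=
  #|[set i : 'I_L | v i 0 != 0]|.

Fixpoint traj (R : ringType) (N L : nat) (D : 'M[R]_N) (H : 'M[R]_(N, L))
  (x0 : 'cV[R]_N) (h : nat -> 'cV[R]_L) (k : nat) : 'cV[R]_N :=
  match k with
  | 0 => x0
  | k'.+1 => D *m traj D H x0 h k' + H *m h k'.+1
  end.

Definition sparse_controllable (R : ringType) (N L s : nat)
  (D : 'M[R]_N) (H : 'M[R]_(N, L)) : Prop :=
  forall xinit xfinal : 'cV[R]_N,
    exists (K : nat) (h : nat -> 'cV[R]_L),
      (forall k, (1 <= k <= K)%N -> (l0norm (h k) <= s)%N) /\
      traj D H xinit h K = xfinal.

From HB Require Import structures.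
From mathcomp Require Import all_boot all_order all_algebra.
From mathcomp Require Import complex.
From mathcomp Require Import reals.
Import Order.TTheory GRing.Theory Num.Theory.
Local Open Scope ring_scope.

(* A left eigenvector w of D with w H = 0 (a failure of the
   Popov-Belevitch-Hautus (PBH) rank test) annihilates every state reachable
   from 0.  A state reached in K > 0 steps is D x + H a with a supported on
   some T, |T| <= s, so it lies in one of finitely many subspaces
   im D + span (H_j, j in T) of dimension at most rank D + s; over an infinite
   field these cannot cover the whole space when N > s + rank D.  PBH gives the Kalman rank condition, so with 1-sparse inputs
   N L steps reach every D^M x, where M >= N L is a Fitting index:
   R^N = im D^M + ker D^M.  PBH at 0 and N <= s + rank D give
   R^N = {H a | ||a||_0 <= s} + im D, and each further step with such an
   input lowers by one the power of D that kills the unreachable part. *)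

Lemma l0norm_le_support {R : nzRingType} {L} (a : 'cV[R]_L) (T : {set 'I_L}) :
  {in ~: T, forall i, a i 0 = 0} -> (l0norm a <= #|T|)%N.
Proof.
move=> aT; apply/subset_leq_card/subsetP => i; rewrite inE.
by apply: contraR => iT; rewrite aT ?inE.
Qed.

Lemma row_fullS {F : fieldType} {m1 m2 n}
    {A : 'M[F]_(m1, n)} {B : 'M[F]_(m2, n)} :
  (A <= B)%MS -> row_full A -> row_full B.
Proof. by move=> sAB; rewrite -!sub1mx => /submx_trans; apply. Qed.

Section RowsOn.
Context {F : fieldType} {m n : nat} (B : 'M[F]_(m, n)).
Implicit Types (T : {set 'I_m}) (x : 'rV[F]_n).

Definition rows_on T : 'M_(#|T|, n) := rowsub enum_val B.

Lemma row_sub_rows_on T j : j \in T -> (row j B <= rows_on T)%MS.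
Proof. by move=> jT; rewrite -(enum_rankK_in jT jT) -row_rowsub row_sub. Qed.

Lemma sub_rows_onP T x :
  (x <= rows_on T)%MS <->
  exists2 a : 'rV_m, {in ~: T, forall j, a 0 j = 0} & x = a *m B.
Proof.
split=> [/submxP[c ->] | [a aT ->]].
  exists (c *m rowsub enum_val 1%:M); last by rewrite -mulmxA -rowsubE.
  move=> j; rewrite inE => jT; rewrite mxE big1 // => k _.
  rewrite !mxE; case: eqP => [ej|]; last by rewrite mulr0.
  by case/negP: jT; rewrite -ej enum_valP.
rewrite mulmx_sum_row; apply: summx_sub => j _.
have [jT|jT] := boolP (j \in T); first by rewrite scalemx_sub ?row_sub_rows_on.
by rewrite aT ?inE // scale0r sub0mx.
Qed.

Lemma rows_onS {T1 T2} : T1 \subset T2 -> (rows_on T1 <= rows_on T2)%MS.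
Proof.
move=> /subsetP sT; apply/row_subP => k.
by rewrite row_rowsub row_sub_rows_on // sT // enum_valP.
Qed.

Lemma rows_on_completion {p} (U : 'M[F]_(p, n)) : row_full (U + B)%MS ->
  exists2 T : {set 'I_m}, (#|T| + \rank U <= n)%N & row_full (U + rows_on T)%MS.
Proof.
have [k] := ubnP (n - \rank U); elim: k p U => // k IH p U ltUk fullUB.
have [fullU|nfullU] := boolP (row_full U).
  by exists set0; rewrite ?cards0 ?rank_leq_col // (row_fullS (addsmxSl _ _)).
have /row_subPn[j njU] : ~~ (B <= U)%MS.
  apply: contra nfullU => sBU; apply: row_fullS fullUB.
  by rewrite addsmx_sub submx_refl.
pose U' := (U + row j B)%MS.
have ltUU' : (\rank U < \rank U')%N.
  have ltU : (U < U')%MS.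
    by rewrite ltmxE addsmxSl (contra _ njU) // => /(submx_trans (addsmxSr _ _)).
  by move: ltU; rewrite ltmxErank => /andP[].
have [T leT fullT] : exists2 T : {set 'I_m},
    (#|T| + \rank U' <= n)%N & row_full (U' + rows_on T)%MS.
  apply: IH; last exact: row_fullS (addsmxS (addsmxSl _ _) (submx_refl B)) fullUB.
  apply: leq_trans (ltnSE ltUk); rewrite ltn_sub2l //.
  by rewrite ltn_neqAle rank_leq_col andbT.
exists (j |: T).
  rewrite cardsU1 (leq_trans _ leT) // addnAC addnC leq_add2l.
  by apply: leq_trans ltUU'; rewrite -add1n leq_add2r leq_b1.
apply: row_fullS fullT; rewrite addsmx_sub andbC.
rewrite (submx_trans (rows_onS (subsetUr _ _)) (addsmxSr _ _)).
rewrite addsmx_sub addsmxSl.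
by rewrite (submx_trans _ (addsmxSr _ _)) ?row_sub_rows_on ?setU11.
Qed.

End RowsOn.

Lemma exists_rV_notin_subspaces {F : numFieldType} {I : finType} (P : pred I) {n}
    (V : I -> 'M[F]_n) :
  (forall i, P i -> \rank (V i) < n)%N ->
  exists x : 'rV_n, forall i, P i -> ~~ (x <= V i)%MS.
Proof.
(* With [V i *m (u i)^T = 0] and [u i != 0], the point [x = (t ^+ j)_j] of the
   moment curve lies in [V i] only if [t] is a root of [rVpoly (u i)]. *)
move=> rkV; pose u i := nz_row (kermx (V i)^T).
have nz_u i : P i -> u i != 0.
  move=> Pi; rewrite nz_row_eq0 -mxrank_eq0 mxrank_ker mxrank_tr subn_eq0.
  by rewrite -ltnNge rkV.
have Vu i : V i *m (u i)^T = 0.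
  by apply: trmx_inj; rewrite trmx_mul trmxK trmx0; apply/sub_kermxP/nz_row_sub.
pose p := \prod_(i | P i) rVpoly (u i).
have nz_p : p != 0.
  apply/prodf_neq0 => i /nz_u; apply: contraNneq => /(congr1 (@poly_rV _ n)).
  by rewrite rVpolyK linear0 => ->.
have /allPn[_ /mapP[k _ ->] nroot_k] :
    ~~ all (root p) [seq k%:R | k <- iota 0 (size p)].
  apply: contra nz_p => roots_p; apply/eqP/(roots_geq_poly_eq0 roots_p).
    by rewrite map_inj_uniq ?iota_uniq // => a b /eqP; rewrite eqr_nat => /eqP.
  by rewrite size_map size_iota.
exists (\row_(i < n) k%:R ^+ i) => i Pi; apply: contra nroot_k => /submxP[c ex].
rewrite /root horner_prod (bigD1 i) //= mulf_eq0; apply/orP; left; apply/eqP.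
rewrite -[RHS](_ : (c *m V i *m (u i)^T) 0 0 = 0).
  by rewrite -ex horner_poly mxE; apply: eq_bigr => j _; rewrite valK !mxE mulrC.
by rewrite -mulmxA Vu mulmx0 mxE.
Qed.

Lemma PBH_rank_ltnP {F : fieldType} {n L} (D : 'M[F]_n) (H : 'M[F]_(n, L)) lam :
  reflect (exists2 w : 'rV_n, w != 0 & w *m D = lam *: w /\ w *m H = 0)
          (\rank (row_mx (lam%:M - D) H) < n)%N.
Proof.
rewrite ltn_neqAle rank_leq_row andbT -[_ == _]/(row_free _) -kermx_eq0.
apply: (iffP rowV0Pn) => [[w /sub_kermxP] | [w nz_w [wD wH]]].
  rewrite mul_mx_row mulmxBr mul_mx_scalar -row_mx0 => /eq_row_mx[/eqP].
  by rewrite subr_eq0 eq_sym => /eqP wD wH nz_w; exists w.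
exists w => //; apply/sub_kermxP.
by rewrite mul_mx_row mulmxBr mul_mx_scalar wD wH subrr row_mx0.
Qed.

Lemma stablemx_eigenvector {K : closedFieldType} {m n}
    (V : 'M[K]_(m, n)) (f : 'M_n) :
  V != 0 -> stablemx V f ->
  exists lam, exists2 v : 'rV_n, v != 0 & (v <= V)%MS /\ v *m f = lam *: v.
Proof.
rewrite -mxrank_eq0 -lt0n -stablemx_row_base => rV sBf.
have sBV : (row_base V <= V)%MS by rewrite eq_row_base.
move: (row_base V) (row_base_free V) sBf sBV rV.
case: (\rank V) => // r B fB sBf sBV _.
have /closed_rootP[lam] : size (char_poly (conjmx B f)) != 1%N.
  by rewrite size_char_poly.
rewrite -eigenvalue_root_char => /eigenvalueP[x xg nz_x].
exists lam, (x *m B); first by rewrite mulmx_free_eq0.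
split; first exact: submx_trans (submxMl _ _) sBV.
by apply/eigenspaceP; rewrite -sub_eigenspace_conjmx //; apply/eigenspaceP.
Qed.

Lemma mulmx_sum_col {R : comPzSemiRingType} {m n} (A : 'M[R]_(m, n)) v :
  A *m v = \sum_j v j 0 *: col j A.
Proof.
apply: trmx_inj; rewrite trmx_mul mulmx_sum_row linear_sum /=.
by apply: eq_bigr => j _; rewrite linearZ /= tr_col mxE.
Qed.

Section Fitting.
Context {F : fieldType} {n : nat} (D : 'M[F]_n).

Lemma mxrank_exp_stable a :
  exists2 k, (a <= k)%N & \rank (D ^+ k.+1) = \rank (D ^+ k).
Proof.
have [r] := ubnP (\rank (D ^+ a)); elim: r a => // r IH a ltar.
have leS : (\rank (D ^+ a.+1) <= \rank (D ^+ a))%N.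
  by rewrite exprSr; apply: mxrankM_maxl.
have [eqS|neqS] := eqVneq (\rank (D ^+ a.+1)) (\rank (D ^+ a)); first by exists a.
have [|k ak eqk] := IH a.+1; last by exists k => //; apply: ltnW.
by apply: leq_trans (ltnSE ltar); rewrite ltn_neqAle neqS leS.
Qed.

Lemma fitting_decomposition a : exists2 M, (a <= M)%N &
  forall y : 'cV_n, exists x u, D ^+ M *m u = 0 /\ y = D ^+ M *m x + u.
Proof.
have [k ak eqk] := mxrank_exp_stable a; exists k => // y.
have subS : ((D ^+ k)^T <= (D ^+ k.+1)^T)%MS.
  have leS : ((D ^+ k.+1)^T <= (D ^+ k)^T)%MS by rewrite exprSr trmx_mul submxMl.
  have := (mxrank_leqif_eq leS).2; rewrite !mxrank_tr eqk eqxx.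
  by move/esym/andP=> [].
have subD j : ((D ^+ k)^T <= (D ^+ (j + k))^T)%MS.
  elim: j => // j IH; apply: submx_trans IH _.
  by rewrite addSnnS !exprD !trmx_mul submxMr.
have /submxP[c ec] : ((D ^+ k *m y)^T <= (D ^+ (k + k))^T)%MS.
  by rewrite trmx_mul (submx_trans (submxMl _ _) (subD k)).
exists c^T, (y - D ^+ k *m c^T); split; last by rewrite addrC subrK.
rewrite mulmxBr mulmxA mulmxE -exprD -[D ^+ k *m y]trmxK ec trmx_mul trmxK.
by rewrite subrr.
Qed.

End Fitting.

Section Reachability.
Context {R : comNzRingType} {n L : nat} (D : 'M[R]_n) (H : 'M[R]_(n, L)).
Implicit Types (y : 'cV[R]_n) (h : nat -> 'cV[R]_L).

Lemma eq_traj x0 h1 h2 K : (forall k, (0 < k <= K)%N -> h1 k = h2 k) ->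
  traj D H x0 h1 K = traj D H x0 h2 K.
Proof.
elim: K => //= K IH eqh; rewrite eqh ?leqnn // IH // => k /andP[k0 kK].
by rewrite eqh // k0 ltnW.
Qed.

Lemma traj_init x0 h K : traj D H x0 h K = D ^+ K *m x0 + traj D H 0 h K.
Proof.
elim: K => [|K IH] /=; first by rewrite expr0 mul1mx addr0.
by rewrite IH mulmxDr mulmxA exprS addrA.
Qed.

Lemma trajD x0 h K1 K2 :
  traj D H x0 h (K1 + K2) =
  traj D H (traj D H x0 h K1) (fun k => h (K1 + k)%N) K2.
Proof. by elim: K2 => [|K2 IH]; rewrite ?addn0 // addnS /= IH addnS. Qed.

Definition reachable s K y := exists2 h,
  forall k, (0 < k <= K)%N -> (l0norm (h k) <= s)%N & traj D H 0 h K = y.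

Lemma reachableW s1 s2 K y : (s1 <= s2)%N -> reachable s1 K y -> reachable s2 K y.
Proof. by move=> le12 [h hs <-]; exists h => // k /hs/leq_trans; apply. Qed.

Lemma reachable_input {s} a : (l0norm a <= s)%N -> reachable s 1 (H *m a).
Proof. by move=> sa; exists (fun=> a) => [k|] //=; rewrite mulmx0 add0r. Qed.

Lemma reachable_cat {s K1 K2 y1 y2} : reachable s K1 y1 -> reachable s K2 y2 ->
  reachable s (K1 + K2) (D ^+ K2 *m y1 + y2).
Proof.
move=> [h1 hs1 <-] [h2 hs2 <-].
exists (fun k => if (k <= K1)%N then h1 k else h2 (k - K1)%N).
  move=> k /andP[k0 kK]; case: (leqP k K1) => [kK1|K1k]; first by rewrite hs1 ?k0.
  by rewrite hs2 // subn_gt0 K1k leq_subLR.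
rewrite trajD traj_init; congr (_ *m _ + _); apply: eq_traj => k /andP[k0 kK].
  by rewrite kK.
by rewrite leqNgt -[X in (X < _)%N]addn0 ltn_add2l k0 /= addKn.
Qed.

Lemma reachable_sum {s K k} (F : 'I_k -> 'cV[R]_n) :
  (forall i, reachable s K (F i)) ->
  reachable s (K * k) (\sum_(i < k) D ^+ (K * i) *m F i).
Proof.
elim: k F => [|k IH] F reachF.
  by rewrite muln0 big_ord0; exists (fun=> 0) => // -[].
rewrite big_ord_recl muln0 expr0 mul1mx mulnS addnC addrC.
have := reachable_cat (IH _ (fun i => reachF (lift ord0 i))) (reachF ord0).
congr (reachable _ _ (_ + _)); rewrite mulmx_sumr; apply: eq_bigr => i _.
by rewrite mulmxA mulmxE -exprD lift0 mulnS.
Qed.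

Lemma reachable_krylov {k} (c : 'I_k -> R) j :
  reachable 1 k (\sum_(i < k) c i *: (D ^+ i *m col j H)).
Proof.
have sparse_delta i : (l0norm (c i *: delta_mx j ord0 : 'cV_L) <= 1)%N.
  rewrite -[X in (_ <= X)%N](cards1 j); apply: l0norm_le_support => j'.
  by rewrite !inE !mxE => /negbTE ->; rewrite mulr0.
have := reachable_sum _ (fun i => reachable_input _ (sparse_delta i)).
rewrite mul1n; congr reachable; apply: eq_bigr => i _.
by rewrite mul1n colE -!scalemxAr mulmxA.
Qed.

Lemma controllable_of_reachable s K :
  (forall y, reachable s K y) -> sparse_controllable s D H.
Proof.
move=> reach xi xf; have [h hs e] := reach (xf - D ^+ K *m xi).
by exists K, h; split => //; rewrite traj_init e addrC subrK.
Qed.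

Section ModuloKernel.
Variable s : nat.
Hypothesis decomp :
  forall y, exists a z, (l0norm a <= s)%N /\ y = H *m a + D *m z.

(* From [z = r + u] with [r] reachable in [K] steps and [D ^+ m.+1 *m u = 0]
   one gets [H *m a + D *m z = (D *m r + H *m a) + D *m u]. *)
Lemma reachable_mod_kerS K m :
  (forall y, exists2 u, D ^+ m.+1 *m u = 0 & reachable s K (y - u)) ->
  (forall y, exists2 u, D ^+ m *m u = 0 & reachable s K.+1 (y - u)).
Proof.
move=> reachK y; have [a [z [sa ->]]] := decomp y.
have [u Du reach_zu] := reachK z.
exists (D *m u); first by rewrite mulmxA mulmxE -exprSr.
have := reachable_cat reach_zu (reachable_input _ sa).
by rewrite addn1 expr1 mulmxBr addrC addrA.
Qed.

Lemma reachable_of_mod_ker K m :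
  (forall y, exists2 u, D ^+ m *m u = 0 & reachable s K (y - u)) ->
  forall y, reachable s (K + m) y.
Proof.
elim: m K => [|m IH] K reachK y.
  by have [u] := reachK y; rewrite expr0 mul1mx addn0 => ->; rewrite subr0.
by rewrite -addSnnS; apply: IH _ (reachable_mod_kerS _ _ reachK) y.
Qed.

End ModuloKernel.

Lemma left_eigenvector_traj0 (w : 'rV_n) lam h K :
  w *m D = lam *: w -> w *m H = 0 -> w *m traj D H 0 h K = 0.
Proof.
move=> wD wH; elim: K => [|K IH] /=; first by rewrite mulmx0.
by rewrite mulmxDr !mulmxA wD wH mul0mx addr0 -scalemxAl IH scaler0.
Qed.

End Reachability.

Lemma map_traj {R S : comNzRingType} (f : {rmorphism R -> S}) {n L}
    (D : 'M[R]_n) (H : 'M[R]_(n, L)) x0 h K :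
  map_mx f (traj D H x0 h K) =
  traj (map_mx f D) (map_mx f H) (map_mx f x0) (fun k => map_mx f (h k)) K.
Proof. by elim: K => [|K IH] //=; rewrite map_mxD !map_mxM IH. Qed.

Definition kalman {R : pzSemiRingType} {n L} (D : 'M[R]_n) (H : 'M[R]_(n, L)) :=
  \mxrow_(i < n) (D ^+ i *m H).

Section Kalman.
Context {F : fieldType} {n L : nat} (D : 'M[F]_n.+1) (H : 'M[F]_(n.+1, L)).

Lemma horner_mx_sum {p : {poly F}} {k} : (size p <= k)%N ->
  horner_mx D p = \sum_(i < k) p`_i *: D ^+ i.
Proof.
move=> le_pk; have {1}<- : \poly_(i < k) p`_i = p.
  apply/polyP => i; rewrite coef_poly; case: ltnP => // le_ki.
  by rewrite nth_default // (leq_trans le_pk le_ki).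
rewrite poly_def rmorph_sum; apply: eq_bigr => i _.
by rewrite /= horner_mxZ rmorphXn /= horner_mx_X.
Qed.

Lemma horner_mx_modp_char (p : {poly F}) :
  horner_mx D (p %% char_poly D) = horner_mx D p.
Proof.
rewrite [in RHS](divp_eq p (char_poly D)) rmorphD rmorphM /=.
by rewrite Cayley_Hamilton mulr0 add0r.
Qed.

Lemma size_modp_char (p : {poly F}) : (size (p %% char_poly D)%R <= n.+1)%N.
Proof.
by rewrite -ltnS -(size_char_poly D) ltn_modp monic_neq0 ?char_poly_monic.
Qed.

Lemma kalman_annihilatorP m (W : 'M[F]_(m, n.+1)) :
  W *m kalman D H = 0 <-> forall k, W *m (D ^+ k *m H) = 0.
Proof.
rewrite mul_mxrow -(mxrow0 (q_ := fun=> L)) -eq_mxrowP /=.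
split=> [WK k | WK i]; last exact: WK.
have -> : D ^+ k = horner_mx D ('X ^+ k) by rewrite rmorphXn /= horner_mx_X.
rewrite -horner_mx_modp_char.
rewrite (horner_mx_sum (size_modp_char _)) !mulmx_suml mulmx_sumr big1 // => i _.
by rewrite -scalemxAl -scalemxAr WK scaler0.
Qed.

Lemma kalman_decomposition : row_free (kalman D H) ->
  forall x : 'cV_n.+1,
  exists q : 'I_L -> {poly F}, x = \sum_j horner_mx D (q j) *m col j H.
Proof.
move=> freeK x.
have /submxP[c ec] : (x^T <= (kalman D H)^T)%MS.
  by rewrite submx_full // /row_full mxrank_tr.
have -> : x = kalman D H *m c^T by rewrite -[x]trmxK ec trmx_mul trmxK.
rewrite -[c^T]submxcolK mul_mxrow_mxcol.
exists (fun j => \poly_(i < n.+1) submxcol c^T (inord i) j 0).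
under [RHS]eq_bigr => j _ do rewrite (horner_mx_sum (size_poly _ _)) mulmx_suml.
rewrite exchange_big /=; apply: eq_bigr => i _.
rewrite -mulmxA (mulmx_sum_col H) mulmx_sumr; apply: eq_bigr => j _.
by rewrite coef_poly ltn_ord inord_val -scalemxAl scalemxAr.
Qed.

Lemma reachable_exp_kalman M : row_free (kalman D H) -> (n.+1 * L <= M)%N ->
  forall x, reachable D H 1 (n.+1 * L) (D ^+ M *m x).
Proof.
move=> freeK leM x; have [q ->] := kalman_decomposition freeK x.
(* Column [j] of [H] drives a block of [n.+1] steps that is then multiplied by
   [D ^+ (n.+1 * j)]; Cayley-Hamilton brings the polynomial it has to
   produce down to degree [n]. *)
pose p (j : 'I_L) := ('X^(M - n.+1 * j) * q j) %% char_poly D.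
have := reachable_sum D H _
  (fun j => reachable_krylov D H (fun i : 'I_n.+1 => (p j)`_i) j).
congr reachable; rewrite mulmx_sumr; apply: eq_bigr => j _.
have -> : \sum_(i < n.+1) (p j)`_i *: (D ^+ i *m col j H)
          = horner_mx D (p j) *m col j H.
  rewrite (horner_mx_sum (size_modp_char _)) mulmx_suml.
  by apply: eq_bigr => i _; rewrite scalemxAl.
rewrite horner_mx_modp_char rmorphM rmorphXn /= horner_mx_X !mulmxA mulmxE.
rewrite -exprD subnKC // (leq_trans _ leM) // leq_mul2l ltnW //.
Qed.

Lemma kalman_row_free {K : closedFieldType} (f : {rmorphism F -> K}) :
  (forall lam, \rank (row_mx (lam%:M - map_mx f D) (map_mx f H)) = n.+1) ->
  row_free (kalman D H).
Proof.
move=> PBH; rewrite -kermx_eq0; apply: contraT => nzA.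
have /kalman_annihilatorP AK : kermx (kalman D H) *m kalman D H = 0.
  exact/sub_kermxP.
set A := kermx _ in nzA AK.
have AD : stablemx A D.
  apply/sub_kermxP/kalman_annihilatorP => k.
  by rewrite -mulmxA (mulmxA D) mulmxE -exprS.
have AH : A *m H = 0 by have := AK 0%N; rewrite expr0 mul1mx.
have [lam [v nz_v [vA vD]]] : exists lam, exists2 v : 'rV_n.+1,
    v != 0 & (v <= map_mx f A)%MS /\ v *m map_mx f D = lam *: v.
  by apply: stablemx_eigenvector; rewrite ?map_mx_eq0 // -map_mxM map_submx.
have vH : v *m map_mx f H = 0.
  by have /submxP[c ->] := vA; rewrite -mulmxA -map_mxM AH map_mx0 mulmx0.
have /PBH_rank_ltnP : exists2 w : 'rV_n.+1,
    w != 0 & w *m map_mx f D = lam *: w /\ w *m map_mx f H = 0 by exists v.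
by rewrite PBH ltnn.
Qed.

End Kalman.

Lemma PBH0_row_full {F K : fieldType} (f : {rmorphism F -> K}) {n L}
    (D : 'M[F]_n) (H : 'M[F]_(n, L)) :
  \rank (row_mx (0%:M - map_mx f D) (map_mx f H)) = n -> row_full (D^T + H^T)%MS.
Proof.
rewrite raddf0 sub0r -map_mxN -map_row_mx mxrank_map => rk.
rewrite /row_full -(adds_eqmx (eqmx_opp D^T) (eqmx_refl H^T)) addsmxE.
by rewrite -linearN /= -tr_row_mx mxrank_tr rk.
Qed.

(* Column spaces are row spaces of transposes: [D^T + H^T] is the column
   space of [row_mx D H], and [rows_on H^T T] that of the columns in [T]. *)
Lemma sparse_input_decomposition {F : fieldType} {n L s}
    (D : 'M[F]_n) (H : 'M[F]_(n, L)) :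
  row_full (D^T + H^T)%MS -> (n <= s + \rank D)%N ->
  forall y, exists a z, (l0norm a <= s)%N /\ y = H *m a + D *m z.
Proof.
move=> fullDH le_n y; have [T leT fullT] := rows_on_completion H^T D^T fullDH.
have /sub_addsmxP[[u w] /= eyT] := submx_full y^T fullT.
have /sub_rows_onP[a aT ea] := submxMl w (rows_on H^T T).
exists a^T, u^T; split.
  apply: leq_trans (l0norm_le_support a^T T _) _ => [i iT|].
    by rewrite mxE aT.
  by rewrite -(leq_add2r (\rank D)) (leq_trans _ le_n) // -(mxrank_tr D).
by apply: trmx_inj; rewrite eyT ea linearD /= !trmx_mul !trmxK addrC.
Qed.

Lemma controllable_PBH {F K : fieldType} (f : {rmorphism F -> K}) {n L s}
    (D : 'M[F]_n) (H : 'M[F]_(n, L)) :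
  sparse_controllable s D H ->
  forall lam, \rank (row_mx (lam%:M - map_mx f D) (map_mx f H)) = n.
Proof.
move=> ctrl lam; apply/eqP; rewrite eqn_leq rank_leq_row leqNgt.
apply/negP => /PBH_rank_ltnP[w nz_w [wD wH]].
case/negP: nz_w; apply/eqP/rowP => i.
have [k [h [_ reach_i]]] := ctrl 0 (delta_mx i 0).
have := map_traj f D H 0 h k; rewrite reach_i map_mx0 map_delta_mx => e.
have := left_eigenvector_traj0 _ _ _ _ (fun j => map_mx f (h j)) k wD wH.
by rewrite -e -colE => /matrixP/(_ 0 0); rewrite !mxE.
Qed.

Lemma controllable_rank {F : numFieldType} {n L s}
    (D : 'M[F]_n) (H : 'M[F]_(n, L)) :
  sparse_controllable s D H -> (n <= s + \rank D)%N.
Proof.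
move=> ctrl; rewrite leqNgt; apply/negP => lt_rank.
pose V T := (D^T + rows_on H^T T)%MS.
have [x xV] : exists x : 'rV_n,
    forall T : {set 'I_L}, (#|T| <= s)%N -> ~~ (x <= V T)%MS.
  apply: exists_rV_notin_subspaces => T leTs; apply: leq_ltn_trans lt_rank.
  apply: leq_trans (mxrank_adds_leqif _ _) _; rewrite mxrank_tr addnC leq_add2r.
  exact: leq_trans (rank_leq_row _) leTs.
have [[|K] [h [hs reach]]] := ctrl 0 x^T.
  by have := xV set0; rewrite cards0 -[x]trmxK -reach trmx0 sub0mx => /(_ isT).
have /negP[] := xV [set i | h K.+1 i 0 != 0] (hs K.+1 (leqnn _)).
rewrite -[x]trmxK -reach /= linearD /= !trmx_mul addmx_sub_adds ?submxMl //.
apply/sub_rows_onP; exists (h K.+1)^T => // i.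
by rewrite !inE mxE => /negbNE/eqP.
Qed.

Lemma sparse_controllable_of_kalman {F : fieldType} {n L s}
    (D : 'M[F]_n.+1) (H : 'M[F]_(n.+1, L)) :
  (0 < s)%N -> row_free (kalman D H) -> row_full (D^T + H^T)%MS ->
  (n.+1 <= s + \rank D)%N -> sparse_controllable s D H.
Proof.
move=> s_gt0 freeK fullDH le_rank.
have [M leM fitM] := fitting_decomposition D (n.+1 * L).
have decomp := sparse_input_decomposition D H fullDH le_rank.
apply: (controllable_of_reachable _ _ _ (n.+1 * L + M)).
apply: (reachable_of_mod_ker _ _ _ decomp) => y.
have [x [u [Mu ->]]] := fitM y; exists u; rewrite ?addrK //.
exact: reachableW s_gt0 (reachable_exp_kalman _ _ _ freeK leM x).
Qed.

Theorem theorem1 (R : realType) (N L s : nat)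
  (HN : (0 < N)%N) (HL : (0 < L)%N) (Hs : (0 < s)%N) (HsL : (s <= L)%N)
  (D : 'M[R]_N) (H : 'M[R]_(N, L)) :
  sparse_controllable s D H <->
  ((forall lam : complex R,
      \rank (row_mx (lam%:M - map_mx (fun x : R => (x%:C)%C) D)
                    (map_mx (fun x : R => (x%:C)%C) H)) = N)
   /\ (N <= s + \rank D)%N).
Proof.
case: N HN D H => // n _ D H; split=> [ctrl | [PBH le_rank]].
  split; first exact: (controllable_PBH (real_complex R)).
  exact: controllable_rank ctrl.
have freeK := kalman_row_free D H (real_complex R) PBH.
have fullDH := PBH0_row_full (real_complex R) D H (PBH 0).
exact: sparse_controllable_of_kalman Hs freeK fullDH le_rank.
Qed.
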